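(* Let $r\ge2$. In the ring $\mathcal{T}_2(B_r)$ the following hold for all generators $T^{(a)}_m(u)$: (1) $T^{(a)}_m(u+2r+1)=T^{(a)}_{2t_a-m}(u)$; (2) $T^{(a)}_m(u+2(2r+1))=T^{(a)}_m(u)$.
   Context: $t_a=1$ for $1\le a\le r-1$ and $t_r=2$. $\mathcal{T}_2(B_r)$ (level 2 restricted T-algebra of type $B_r$, with $\alpha_r$ the short root) is the commutative ring with generators $T^{(a)}_1(u)^{\pm1}$ ($1\le a\le r-1$) and $T^{(r)}_m(u)^{\pm1}$ ($m=1,2,3$), $u\in\frac12\mathbb{Z}$, and relations, for all $u\in\frac12\mathbb{Z}$: $T^{(a)}_1(u-1)T^{(a)}_1(u+1)=1+T^{(a-1)}_1(u)T^{(a+1)}_1(u)$ ($1\le a\le r-2$); $T^{(r-1)}_1(u-1)T^{(r-1)}_1(u+1)=1+T^{(r-2)}_1(u)T^{(r)}_2(u)$; $T^{(r)}_1(u-\frac12)T^{(r)}_1(u+\frac12)=T^{(r)}_2(u)+T^{(r-1)}_1(u)$; $T^{(r)}_2(u-\frac12)T^{(r)}_2(u+\frac12)=T^{(r)}_1(u)T^{(r)}_3(u)+T^{(r-1)}_1(u-\frac12)T^{(r-1)}_1(u+\frac12)$; $T^{(r)}_3(u-\frac12)T^{(r)}_3(u+\frac12)=T^{(r)}_2(u)+T^{(r-1)}_1(u)$; where $T^{(0)}_1=1$. *)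

From HB Require Import structures.
From mathcomp Require Import all_boot all_order all_algebra.
Set Implicit Arguments. Unset Strict Implicit. Unset Printing Implicit Defensive.
Import Order.TTheory GRing.Theory Num.Theory.
Local Open Scope ring_scope.

(* Spectral parameter u in (1/2)Z is encoded by the integer k with u = k/2.
   A family T : nat -> nat -> int -> R encodes T^{(a)}_m(k/2).               *)

Definition tB (r a : nat) : nat := if a == r then 2%N else 1%N.

Definition Tz (R : comPzRingType) (T : nat -> nat -> int -> R) (a : nat) (k : int) : R :=
  if a == 0%N then 1 else T a 1%N k.

Definition is_gen (r a m : nat) : bool :=
  ((1 <= a <= r.-1)%N && (m == 1%N)) || ((a == r) && (1 <= m <= 3)%N).

Definition invertible (R : comPzRingType) (x : R) : Prop := exists y : R, x * y = 1.

Definition TsysB2 (R : comPzRingType) (r : nat) (T : nat -> nat -> int -> R) : Prop :=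
     (forall a m k, is_gen r a m -> invertible (T a m k)) /\
      (forall a k, (1 <= a <= r - 2)%N ->
         T a 1%N (k - 2) * T a 1%N (k + 2) = 1 + Tz T a.-1 k * T a.+1 1%N k) /\
      (forall k, T r.-1 1%N (k - 2) * T r.-1 1%N (k + 2) = 1 + Tz T (r - 2) k * T r 2%N k) /\
      (forall k, T r 1%N (k - 1) * T r 1%N (k + 1) = T r 2%N k + T r.-1 1%N k) /\
      (forall k, T r 2%N (k - 1) * T r 2%N (k + 1)
                 = T r 1%N k * T r 3%N k + T r.-1 1%N (k - 1) * T r.-1 1%N (k + 1)) /\
      (forall k, T r 3%N (k - 1) * T r 3%N (k + 1) = T r 2%N k + T r.-1 1%N k).

From HB Require Import structures.
From mathcomp Require Import all_boot all_order all_algebra.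
From mathcomp Require Import ring zify.
Set Implicit Arguments. Unset Strict Implicit. Unset Printing Implicit Defensive.
Import Order.TTheory GRing.Theory Num.Theory.
Local Open Scope ring_scope.

(* Fix an offset c.  The values of T^{(a)}_{t_a} at k = 2t + c and of T^{(r)}_1,
   T^{(r)}_3 at k = 2t + c + 1 form a closed system X_a(t), Z(t), W(t) on Z, which
   we solve explicitly.  From X_1 on one period build vectors u_0, ..., u_{2r+1} of
   R^2 by a three-term recurrence, so that det(u_j, u_{j+1}) = 1; by the Plucker
   relation their 2x2 minors satisfy the type A T-system and reproduce X_a on a
   triangle.  The relation for X_r gives det(u_0, u_{2r+1}) = Z(r) W(r), which is
   invertible, so a transvection M fixing u_0 - u_{2r+1} maps u_0 to u_{2r+1} and
   the u_j extend to U : Z -> R^2 with U(j + 2r + 1) = M U(j).  Interleaving U as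
   V(2i) = U(i), V(2i+1) = U(i+r+1), the minors det(V(t-a-1), V(t+a+1)) together
   with det(u_0 - u_{2r+1}, V(t-r)) (rescaled by 1/Z(r) or 1/W(r)) solve the system;
   as V(n + 2r + 1) is V(n) or M V(n) and M preserves determinants, this solution is
   (2r+1)-periodic with Z and W exchanged.  It agrees with the given one on two
   consecutive time slices, and invertibility of the generators propagates the
   agreement to all times. *)

Section Det2.
Variable R : comPzRingType.
Implicit Types (g u v w : R * R) (s : R).

Definition det2 u v : R := u.1 * v.2 - u.2 * v.1.

Lemma det2_plucker u0 u1 u2 u3 :
  det2 u0 u2 * det2 u1 u3 = det2 u0 u1 * det2 u2 u3 + det2 u0 u3 * det2 u1 u2.
Proof. rewrite /det2; ring. Qed.

Lemma det2_frieze u0 u1 u2 u3 : det2 u0 u1 = 1 -> det2 u2 u3 = 1 ->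
  det2 u0 u2 * det2 u1 u3 = 1 + det2 u1 u2 * det2 u0 u3.
Proof. by move=> h01 h23; rewrite det2_plucker h01 h23 mul1r (mulrC (det2 u0 u3)). Qed.

Definition shear g s v : R * R :=
  (v.1 - s * det2 g v * g.1, v.2 - s * det2 g v * g.2).

Lemma det2_shear_r g s u v : det2 u (shear g s v) = det2 u v + s * det2 g u * det2 g v.
Proof. rewrite /shear /det2 /=; ring. Qed.

Lemma det2_shear_l g s v : det2 g (shear g s v) = det2 g v.
Proof. rewrite /shear /det2 /=; ring. Qed.

Lemma det2_shear g s u v : det2 (shear g s u) (shear g s v) = det2 u v.
Proof. rewrite /shear /det2 /=; ring. Qed.

Lemma shear0 g v : shear g 0 v = v.
Proof. by case: v => x y; rewrite /shear !mul0r !subr0. Qed.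

Lemma shear_add g s s' v : shear g s (shear g s' v) = shear g (s + s') v.
Proof. rewrite {1}/shear det2_shear_l /shear /=; congr pair; ring. Qed.

Lemma det2_diff_l u w : det2 (u.1 - w.1, u.2 - w.2) u = det2 u w.
Proof. rewrite /det2 /=; ring. Qed.

Lemma shear_diff u w s : s * det2 u w = 1 -> shear (u.1 - w.1, u.2 - w.2) s u = w.
Proof.
move=> h; rewrite /shear det2_diff_l h !mul1r.
by case: w {h} => x y /=; congr pair; ring.
Qed.

Definition twist g s (e : bool) v := if e then shear g s v else v.

Lemma det2_twist g s e u v : det2 (twist g s e u) (twist g s e v) = det2 u v.
Proof. by case: e => //=; apply: det2_shear. Qed.

Lemma det2_twist_l g s e v : det2 g (twist g s e v) = det2 g v.
Proof. by case: e => //=; apply: det2_shear_l. Qed.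

Lemma det2_twist_sum g s e u v :
  det2 u (twist g s e v) + det2 v (twist g s (~~ e) u) = s * det2 g u * det2 g v.
Proof. by case: e; rewrite /= det2_shear_r /det2; ring. Qed.

Lemma det2_twist_exchange g s e u v w :
  det2 u (twist g s e v) * det2 v (twist g s (~~ e) w)
    - det2 v (twist g s (~~ e) u) * det2 w (twist g s e v)
  = s * det2 g v ^+ 2 * det2 u w.
Proof. by case: e; rewrite /= !det2_shear_r /det2; ring. Qed.

End Det2.

Section ContinuantVectors.
Variables (R : comPzRingType) (c : nat -> R).

Fixpoint contv (n : nat) : R * R :=
  match n with
  | 0 => (1, 0)
  | 1 => (0, 1)
  | (m.+1 as n').+1 => (c n' * (contv n').1 - (contv m).1, c n' * (contv n').2 - (contv m).2)
  end.

Lemma det2_contv n : det2 (contv n) (contv n.+1) = 1.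
Proof. by elim: n => [|n IH]; rewrite /det2 /=; [ring | rewrite -[RHS]IH /det2; ring]. Qed.

Lemma det2_contv2 n : det2 (contv n) (contv n.+2) = c n.+1.
Proof.
transitivity (c n.+1 * det2 (contv n) (contv n.+1)); last by rewrite det2_contv mulr1.
rewrite /det2 /=; ring.
Qed.

End ContinuantVectors.

(* The relations of T_2(B_r) restricted to one offset, see [Tslice] below. *)
Definition reduced_Tsys (R : comPzRingType) (r : nat) (X : nat -> int -> R)
    (Z W : int -> R) :=
  [/\ forall t, X 0%N t = 1,
      forall a t, (0 < a < r)%N -> X a (t - 1) * X a (t + 1) = 1 + X a.-1 t * X a.+1 t,
      forall t, Z (t - 1) * Z t = X r t + X r.-1 t,
      forall t, W (t - 1) * W t = X r t + X r.-1 t &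
      forall t, X r t * X r (t + 1) = Z t * W t + X r.-1 t * X r.-1 (t + 1)].

Definition reduced_invertible (R : comPzRingType) (r : nat) (X : nat -> int -> R)
    (Z W : int -> R) :=
  [/\ forall a t, (0 < a <= r)%N -> invertible (X a t),
      forall t, invertible (Z t) & forall t, invertible (W t)].

Lemma invertible_mulrI (R : comPzRingType) (x y z : R) : invertible x -> x * y = x * z -> y = z.
Proof. by case=> w hw h; rewrite -[y]mul1r -[z]mul1r -hw (mulrC x) -!mulrA h. Qed.

Lemma invertible_mulIr (R : comPzRingType) (x y z : R) : invertible x -> y * x = z * x -> y = z.
Proof. by move=> hx; rewrite ![_ * x]mulrC; apply: invertible_mulrI. Qed.

Section SliceUniqueness.
Variables (R : comPzRingType) (r : nat) (X X' : nat -> int -> R) (Z Z' W W' : int -> R).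
Hypotheses (r_gt0 : (0 < r)%N) (sys : reduced_Tsys r X Z W) (sys' : reduced_Tsys r X' Z' W').
Hypothesis inv : reduced_invertible r X Z W.

Definition slice_eq t :=
  [/\ forall a, (a <= r)%N -> X a t = X' a t, forall a, (a <= r)%N -> X a (t + 1) = X' a (t + 1),
      Z t = Z' t & W t = W' t].

Lemma slice_eq_succ t : slice_eq t -> slice_eq (t + 1).
Proof.
case: sys sys' inv => X0 X1 XZ XW Xr [X0' X1' XZ' XW' Xr'] [iX iZ iW] [e0 e1 eZ eW].
have eZ1 : Z (t + 1) = Z' (t + 1).
  apply: (invertible_mulrI (iZ t)); have := XZ (t + 1); have := XZ' (t + 1).
  by rewrite !addrK -eZ -!e1 ?leq_pred // => -> ->.
have eW1 : W (t + 1) = W' (t + 1).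
  apply: (invertible_mulrI (iW t)); have := XW (t + 1); have := XW' (t + 1).
  by rewrite !addrK -eW -!e1 ?leq_pred // => -> ->.
have elow a : (a < r)%N -> X a (t + 1 + 1) = X' a (t + 1 + 1).
  case: a => [|a] ha; first by rewrite X0 X0'.
  apply: (invertible_mulrI (iX a.+1 t _)); first lia.
  have := X1 a.+1 (t + 1) ha; have := X1' a.+1 (t + 1) ha.
  rewrite /= !addrK -?e0 -?e1; try lia; by move=> -> ->.
have etop : X r (t + 1 + 1) = X' r (t + 1 + 1).
  apply: (invertible_mulrI (iX r (t + 1) _)); first lia.
  have := Xr (t + 1); have := Xr' (t + 1).
  rewrite -eZ1 -eW1 -(e1 r) // -(e1 r.-1) ?leq_pred // -(elow r.-1) ?ltn_predL //.
  by move=> -> ->.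
split=> // a ha.
by case: (ltnP a r) => har; [apply: elow | rewrite (_ : a = r) //; lia].
Qed.

Lemma slice_eq_pred t : slice_eq (t + 1) -> slice_eq t.
Proof.
case: sys sys' inv => X0 X1 XZ XW Xr [X0' X1' XZ' XW' Xr'] [iX iZ iW] [e1 e2 eZ eW].
have eZ0 : Z t = Z' t.
  apply: (invertible_mulIr (iZ (t + 1))); have := XZ (t + 1); have := XZ' (t + 1).
  by rewrite !addrK -eZ -!e1 ?leq_pred // => -> ->.
have eW0 : W t = W' t.
  apply: (invertible_mulIr (iW (t + 1))); have := XW (t + 1); have := XW' (t + 1).
  by rewrite !addrK -eW -!e1 ?leq_pred // => -> ->.
have elow a : (a < r)%N -> X a t = X' a t.
  case: a => [|a] ha; first by rewrite X0 X0'.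
  apply: (invertible_mulIr (iX a.+1 (t + 1 + 1) _)); first lia.
  have := X1 a.+1 (t + 1) ha; have := X1' a.+1 (t + 1) ha.
  rewrite /= !addrK -?e2 -?e1; try lia; by move=> -> ->.
have etop : X r t = X' r t.
  apply: (invertible_mulIr (iX r (t + 1) _)); first lia.
  have := Xr t; have := Xr' t.
  rewrite -eZ0 -eW0 -(e1 r) // -(e1 r.-1) ?leq_pred // -(elow r.-1) ?ltn_predL //.
  by move=> -> ->.
split=> // a ha.
by case: (ltnP a r) => har; [apply: elow | rewrite (_ : a = r) //; lia].
Qed.

Lemma slice_eq_all t0 : slice_eq t0 -> forall t, slice_eq t.
Proof.
move=> h t; rewrite -(subrK t0 t) addrC; elim/int_ind: (t - t0) => [|n IH|n IH].
- by rewrite addr0.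
- by rewrite intS addrCA addrC; apply: slice_eq_succ.
- by apply: slice_eq_pred; rewrite (_ : _ + 1 = t0 + - n%:Z) //; lia.
Qed.

End SliceUniqueness.

Section TwistedModel.
Variables (R : comPzRingType) (r : nat) (g : R * R) (zi wi : R) (V : int -> R * R).
Hypothesis r_gt0 : (0 < r)%N.
Local Notation p := (2 * r + 1)%N%:Z.
Local Notation twist := (twist g (zi * wi)).
Hypothesis V_unimodular : forall n, det2 (V n) (V (n + 2)) = 1.
Hypothesis V_shift : forall n, V (n + p) = twist (2 %| n)%Z (V n).

Definition modelX (a : nat) (t : int) : R := det2 (V (t - a%:Z - 1)) (V (t + a%:Z + 1)).
(* The factors alternate with the parity of t - r, so that the shift by the odd
   period exchanges modelZ and modelW. *)
Definition modelZ (t : int) : R :=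
  det2 g (V (t - r%:Z)) * (if (2 %| t - r%:Z)%Z then wi else zi).
Definition modelW (t : int) : R :=
  det2 g (V (t - r%:Z)) * (if (2 %| t - r%:Z)%Z then zi else wi).

Lemma modelX_top m : modelX r (m + r%:Z) = det2 (V (m - 1)) (twist (2 %| m)%Z (V m)).
Proof. by rewrite /modelX -V_shift; congr (det2 (V _) (V _)); lia. Qed.

Lemma modelX_below m :
  modelX r.-1 (m + r%:Z) = det2 (V m) (twist (~~ (2 %| m))%Z (V (m - 1))).
Proof.
rewrite /modelX (_ : ~~ _ = (2 %| m - 1)%Z); last by lia.
by rewrite -V_shift; congr (det2 (V _) (V _)); lia.
Qed.

Lemma modelX_frieze a t : (0 < a)%N ->
  modelX a (t - 1) * modelX a (t + 1) = 1 + modelX a.-1 t * modelX a.+1 t.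
Proof.
move=> a_gt0; rewrite /modelX.
transitivity (det2 (V (t - a%:Z - 2)) (V (t + a%:Z))
              * det2 (V (t - a%:Z - 2 + 2)) (V (t + a%:Z + 2))).
  by congr (det2 (V _) (V _) * det2 (V _) (V _)); lia.
rewrite det2_frieze ?V_unimodular //.
by congr (1 + det2 (V _) (V _) * det2 (V _) (V _)); lia.
Qed.

Lemma model_Tsys : reduced_Tsys r modelX modelZ modelW.
Proof.
have parity t : (2 %| t - 1)%Z = ~~ (2 %| t)%Z by lia.
have sumX t : modelX r t + modelX r.-1 t
              = zi * wi * det2 g (V (t - r%:Z - 1)) * det2 g (V (t - r%:Z)).
  by rewrite -{1 2}(subrK r%:Z t) modelX_top modelX_below det2_twist_sum.
have shift1 t : t - 1 - r%:Z = t - r%:Z - 1 by ring.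
split=> [t | a t /andP[a_gt0 _] | t | t | t].
- by rewrite -(V_unimodular (t - 1)) /modelX; congr (det2 (V _) (V _)); lia.
- exact: modelX_frieze.
- by rewrite sumX /modelZ shift1 parity; case: (2 %| t - r%:Z)%Z => /=; ring.
- by rewrite sumX /modelW shift1 parity; case: (2 %| t - r%:Z)%Z => /=; ring.
- rewrite -(subrK r%:Z t) (_ : _ + 1 = t - r%:Z + 1 + r%:Z); last by ring.
  move: (t - r%:Z) => m; rewrite !modelX_top !modelX_below addrK.
  rewrite (_ : (2 %| m + 1)%Z = ~~ (2 %| m)%Z) ?negbK; last by lia.
  apply/eqP; rewrite -subr_eq det2_twist_exchange.
  rewrite (_ : m + 1 = m - 1 + 2) ?V_unimodular ?mulr1 /modelZ /modelW ?addrK; last by ring.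
  by case: (2 %| m)%Z; apply/eqP; ring.
Qed.

Lemma model_shift t :
  [/\ forall a, modelX a (t + p) = modelX a t,
      modelZ (t + p) = modelW t & modelW (t + p) = modelZ t].
Proof.
have shift_r : t + p - r%:Z = t - r%:Z + p by ring.
have parity_p : (2 %| t - r%:Z + p)%Z = ~~ (2 %| t - r%:Z)%Z by lia.
split=> [a||]; [| by rewrite /modelZ /modelW shift_r V_shift det2_twist_l parity_p;
                   case: (2 %| t - r%:Z)%Z ..].
rewrite /modelX (_ : t + p - _ - 1 = t - a%:Z - 1 + p); last by ring.
rewrite (_ : t + p + _ + 1 = t + a%:Z + 1 + p); last by ring.
rewrite !V_shift (_ : (2 %| t + a%:Z + 1)%Z = (2 %| t - a%:Z - 1)%Z); last by lia.
exact: det2_twist.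
Qed.

End TwistedModel.

Section Construction.
Variables (R : comPzRingType) (r : nat) (X : nat -> int -> R) (Z W : int -> R).
Hypotheses (r_gt0 : (0 < r)%N) (sys : reduced_Tsys r X Z W) (inv : reduced_invertible r X Z W).
Variables zi wi : R.
Hypotheses (Zzi : Z r%:Z * zi = 1) (Wwi : W r%:Z * wi = 1).
Local Notation p := (2 * r + 1)%N%:Z.

Definition vidx (n : int) : int := (n %/ 2)%Z + (if (2 %| n)%Z then 0 else r.+1%:Z).

Lemma vidx_add2 n : vidx (n + 2) = vidx n + 1.
Proof. by rewrite /vidx; do !case: ifP => ?; lia. Qed.

Lemma vidx_addp n : vidx (n + p) = vidx n + (if (2 %| n)%Z then p else 0).
Proof. by rewrite /vidx; do !case: ifP => ?; lia. Qed.

Lemma vidx_range n : -1 <= n <= (2 * r + 2)%N%:Z -> 0 <= vidx n <= p.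
Proof. by rewrite /vidx; case: ifP => ?; lia. Qed.

(* X_1 at the t in [1, 2r] with vidx t = j. *)
Definition coef (j : nat) : R := X 1 (if (j <= r)%N then (2 * j)%N%:Z else (2 * j)%N%:Z - p).

Lemma coef_vidx t : 1 <= t <= (2 * r)%N%:Z -> coef (absz (vidx t)) = X 1 t.
Proof.
move=> ht; rewrite /coef /vidx; congr (X 1 _).
by case: (boolP (2 %| t)%Z) => ?; case: ifP => ?; lia.
Qed.

Local Notation u := (contv coef).
Definition V0 (n : int) : R * R := u (absz (vidx n)).

Lemma V0_unimodular n : -1 <= n <= (2 * r)%N%:Z -> det2 (V0 n) (V0 (n + 2)) = 1.
Proof.
move=> hn; have hs : 0 <= vidx n <= p by apply: vidx_range; lia.
by rewrite /V0 vidx_add2 (_ : absz (vidx n + 1) = (absz (vidx n)).+1) ?det2_contv //; lia.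
Qed.

Lemma V0_X1 t : 1 <= t <= (2 * r)%N%:Z -> det2 (V0 (t - 2)) (V0 (t + 2)) = X 1 t.
Proof.
move=> ht; have hs : 0 <= vidx (t - 2) <= p by apply: vidx_range; lia.
have e1 := vidx_add2 (t - 2); rewrite subrK in e1.
rewrite /V0 vidx_add2 -coef_vidx // e1.
rewrite (_ : absz (vidx (t - 2) + 1 + 1) = (absz (vidx (t - 2))).+2); last by lia.
by rewrite det2_contv2; congr (coef _); lia.
Qed.

Lemma det2_triangle (S : int -> R * R) :
  (forall n, -1 <= n <= (2 * r)%N%:Z -> det2 (S n) (S (n + 2)) = 1) ->
  (forall t, 1 <= t <= (2 * r)%N%:Z -> det2 (S (t - 2)) (S (t + 2)) = X 1 t) ->
  forall a t n m, (a <= r)%N -> a%:Z <= t -> t + a%:Z <= p ->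
    n = t - a%:Z - 1 -> m = t + a%:Z + 1 -> det2 (S n) (S m) = X a t.
Proof.
move=> S1 S2; have [X0 X1 _ _ _] := sys; have [iX _ _] := inv.
pose P a := forall t n m, (a <= r)%N -> a%:Z <= t -> t + a%:Z <= p ->
  n = t - a%:Z - 1 -> m = t + a%:Z + 1 -> det2 (S n) (S m) = X a t.
suff PP a : P a /\ P a.+1 by move=> a; apply: (PP a).1.
elim: a => [|a [IHa IHa1]].
  split=> t n m ha ht htp -> ->.
  - by rewrite X0 -(S1 (t - 0%:Z - 1)); [congr (det2 _ (S _)); lia | lia].
  - by rewrite -S2; [congr (det2 (S _) (S _)); lia | lia].
split=> // t n m ha ht htp -> ->.
have h01 : det2 (S (t - a.+2%:Z - 1)) (S (t - a.+2%:Z - 1 + 2)) = 1 by apply: S1; lia.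
have h23 : det2 (S (t + a.+2%:Z + 1 - 2)) (S (t + a.+2%:Z + 1 - 2 + 2)) = 1 by apply: S1; lia.
rewrite subrK in h23; have := det2_frieze h01 h23.
rewrite (IHa1 (t - 1) (t - a.+2%:Z - 1) (t + a.+2%:Z + 1 - 2)); try lia.
rewrite (IHa1 (t + 1) (t - a.+2%:Z - 1 + 2) (t + a.+2%:Z + 1)); try lia.
rewrite (IHa t (t - a.+2%:Z - 1 + 2) (t + a.+2%:Z + 1 - 2)); try lia.
rewrite X1 //= => /addrI/esym eq_mul; have [a0 | a_gt0] := posnP a.
  by rewrite a0 X0 !mul1r in eq_mul *.
by apply: (invertible_mulrI _ eq_mul); apply: iX; lia.
Qed.

Lemma det2_u_end : det2 (u 0) (u (2 * r + 1)) = Z r%:Z * W r%:Z.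
Proof.
have [_ _ _ _ Xr] := sys.
have tri := det2_triangle V0_unimodular V0_X1.
have V0_vidx n n' : vidx n = vidx n' -> V0 n = V0 n' by rewrite /V0 => ->.
have V0_2r2 : V0 (2 * r + 2)%N%:Z = V0 1 by apply: V0_vidx; rewrite /vidx /=; case: ifP => ?; lia.
have V0_2r : V0 (2 * r)%N%:Z = V0 (-1) by apply: V0_vidx; rewrite /vidx /=; case: ifP => ?; lia.
have V0_p : V0 p = u (2 * r + 1) by rewrite /V0 /vidx; case: ifP => ?; congr (u _); lia.
have Xrr : det2 (V0 (-1)) (V0 p) = X r r%:Z by apply: tri; lia.
have Xrr1 : det2 (V0 0) (V0 1) = X r (r%:Z + 1) by rewrite -V0_2r2; apply: tri; lia.
have Xr1r : det2 (V0 0) (V0 (-1)) = X r.-1 r%:Z by rewrite -V0_2r; apply: tri; lia.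
have Xr1r1 : det2 (V0 1) (V0 p) = X r.-1 (r%:Z + 1) by apply: tri; lia.
have := det2_plucker (V0 0) (V0 (-1)) (V0 1) (V0 p).
rewrite Xrr Xrr1 Xr1r Xr1r1 (V0_unimodular (n := -1)) // mulr1 mulrC Xr addrC V0_p.
by move/addrI/esym.
Qed.

Local Notation g := ((u 0).1 - (u (2 * r + 1)).1, (u 0).2 - (u (2 * r + 1)).2).
Local Notation s := (zi * wi).

Lemma shear_u_end : shear g s (u 0) = u (2 * r + 1).
Proof. by apply: shear_diff; rewrite det2_u_end mulrACA (mulrC zi) (mulrC wi) Zzi Wwi mulr1. Qed.

Definition U (j : int) : R * R := shear g ((j %/ p)%Z%:~R * s) (u (absz (j %% p)%Z)).

Lemma U_block q (j : nat) : (j <= 2 * r + 1)%N -> U (q * p + j%:Z) = shear g (q%:~R * s) (u j).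
Proof.
have small q' (j' : nat) : (j' < 2 * r + 1)%N -> U (q' * p + j'%:Z) = shear g (q'%:~R * s) (u j').
  by move=> hj'; rewrite /U divzMDl ?divz_small ?addr0 ?modzMDl ?modz_small //; lia.
move=> hj; case: (ltnP j (2 * r + 1)) => [/small // | hjp].
rewrite (_ : j = 2 * r + 1)%N; last by lia.
rewrite (_ : q * p + _ = (q + 1) * p + 0%N%:Z); last by ring.
rewrite small; last by lia.
by rewrite intrD mulrDl mul1r -shear_add shear_u_end.
Qed.

Lemma divp_decomp j : exists q (j0 : nat), (j0 < 2 * r + 1)%N /\ j = q * p + j0%:Z.
Proof.
exists (j %/ p)%Z, (absz (j %% p)%Z).
have := divz_eq j p; have := @modz_ge0 j p; have := @ltz_pmod j p; lia.
Qed.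

Lemma U_unimodular j : det2 (U j) (U (j + 1)) = 1.
Proof.
have [q [j0 [hj0 ->]]] := divp_decomp j.
rewrite (_ : _ + 1 = q * p + j0.+1%:Z); last by lia.
by rewrite !U_block ?det2_shear ?det2_contv //; lia.
Qed.

Lemma U_shift j : U (j + p) = shear g s (U j).
Proof.
have [q [j0 [hj0 ->]]] := divp_decomp j.
rewrite (_ : _ + p = (q + 1) * p + j0%:Z); last by ring.
by rewrite !U_block 1?ltnW // shear_add intrD mulrDl mul1r (addrC s).
Qed.

Definition V (n : int) : R * R := U (vidx n).

Lemma V_unimodular n : det2 (V n) (V (n + 2)) = 1.
Proof. by rewrite /V vidx_add2 U_unimodular. Qed.

Lemma V_shift n : V (n + p) = twist g s (2 %| n)%Z (V n).
Proof. by rewrite /V vidx_addp; case: ifP; rewrite ?addr0 ?U_shift. Qed.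

Lemma V_V0 n : -1 <= n <= (2 * r + 2)%N%:Z -> V n = V0 n.
Proof.
move=> hn; have hs := vidx_range hn; rewrite /V /V0.
transitivity (U (0 * p + (absz (vidx n))%:Z)); first by congr U; lia.
by rewrite U_block ?mulr0z ?mul0r ?shear0 //; lia.
Qed.

Lemma model_slice :
  slice_eq r X (modelX V) Z (modelZ r g zi wi V) W (modelW r g zi wi V) r%:Z.
Proof.
have tri := det2_triangle V0_unimodular V0_X1.
have modelE : det2 g (V (r%:Z - r%:Z)) = Z r%:Z * W r%:Z.
  by rewrite subrr V_V0 // (_ : V0 0 = u 0) // det2_diff_l det2_u_end.
split=> [a ha | a ha | |].
- by rewrite /modelX !V_V0; [symmetry; apply: tri | ..]; lia.
- by rewrite /modelX !V_V0; [symmetry; apply: tri | ..]; lia.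
- by rewrite /modelZ modelE subrr dvdz0 -mulrA Wwi mulr1.
- by rewrite /modelW modelE subrr dvdz0 mulrAC Zzi mul1r.
Qed.

Lemma reduced_Tsys_periodic_of_inverses t :
  [/\ forall a, (a <= r)%N -> X a (t + p) = X a t, Z (t + p) = W t & W (t + p) = Z t].
Proof.
have agree := slice_eq_all r_gt0 sys (model_Tsys r_gt0 V_unimodular V_shift) inv model_slice.
have [eX _ eZ eW] := agree t; have [eX' _ eZ' eW'] := agree (t + p).
have [dX mZ mW] := model_shift r_gt0 V_shift t.
by split=> [a ha||]; rewrite ?eX' ?eX ?eZ' ?eW' ?eZ ?eW ?dX.
Qed.

End Construction.

Theorem reduced_Tsys_periodic (R : comPzRingType) (r : nat) (X : nat -> int -> R) (Z W : int -> R) :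
  (0 < r)%N -> reduced_Tsys r X Z W -> reduced_invertible r X Z W ->
  forall t, [/\ forall a, (a <= r)%N -> X a (t + (2 * r + 1)%N%:Z) = X a t,
               Z (t + (2 * r + 1)%N%:Z) = W t & W (t + (2 * r + 1)%N%:Z) = Z t].
Proof.
move=> r_gt0 sys inv; have [_ iZ iW] := inv.
have [zi Zzi] := iZ r%:Z; have [wi Wwi] := iW r%:Z.
exact: (reduced_Tsys_periodic_of_inverses r_gt0 sys inv Zzi Wwi).
Qed.

(* X a t is T^{(a)}_{t_a} at k = 2t + c, while Z t and W t below are T^{(r)}_1 and
   T^{(r)}_3 at k = 2t + c + 1. *)
Definition Tslice (R : comPzRingType) (r : nat) (T : nat -> nat -> int -> R) (c : int)
  (a : nat) (t : int) : R :=
  if a == 0%N then 1 else T a (tB r a) (t * 2 + c).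

Section TsysB2Slices.
Variables (R : comPzRingType) (r : nat) (T : nat -> nat -> int -> R) (c : int).
Hypotheses (r_gt1 : (1 < r)%N) (hT : TsysB2 r T).
Local Notation X := (Tslice r T c).
Local Notation Z := (fun t => T r 1%N (t * 2 + c + 1)).
Local Notation W := (fun t => T r 3%N (t * 2 + c + 1)).

Lemma Tslice_top t : X r t = T r 2%N (t * 2 + c).
Proof. by rewrite /Tslice /tB eqxx (gtn_eqF (ltnW r_gt1)). Qed.

Lemma Tslice_below a t : (0 < a < r)%N -> X a t = T a 1%N (t * 2 + c).
Proof. by case/andP=> a_gt0 a_lt; rewrite /Tslice /tB (gtn_eqF a_gt0) (ltn_eqF a_lt). Qed.

Lemma Tslice_Tz a t : (a < r)%N -> X a t = Tz T a (t * 2 + c).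
Proof. by rewrite /Tz; case: eqP => [-> // | /eqP a_gt0 ha]; apply: Tslice_below; lia. Qed.

Lemma TsysB2_reduced : reduced_Tsys r X Z W.
Proof.
have [_ [hA [hA' [hZ [hB hW]]]]] := hT.
have Xr1 t : X r.-1 t = T r.-1 1%N (t * 2 + c) by apply: Tslice_below; lia.
have shiftm t : (t - 1) * 2 + c = t * 2 + c - 2 by ring.
have shiftp t : (t + 1) * 2 + c = t * 2 + c + 2 by ring.
split=> [t | a t ha | t | t | t].
- by rewrite /Tslice.
- have a_lt : (a < r)%N by case/andP: ha.
  rewrite !(Tslice_below _ ha) shiftm shiftp (Tslice_Tz _ (leq_ltn_trans (leq_pred a) a_lt)).
  have [ha1 | ha1] : (a.+1 < r)%N \/ a.+1 = r by lia.
  + by rewrite Tslice_below ?hA //; lia.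
  + by move: (hA' (t * 2 + c)); rewrite ha1 Tslice_top -ha1 subn2.
- by rewrite Tslice_top Xr1 (_ : (t - 1) * 2 + c + 1 = t * 2 + c - 1) ?hZ //; ring.
- by rewrite Tslice_top Xr1 (_ : (t - 1) * 2 + c + 1 = t * 2 + c - 1) ?hW //; ring.
- rewrite !Tslice_top !Xr1 (_ : (t + 1) * 2 + c = t * 2 + c + 1 + 1); last by ring.
  by have := hB (t * 2 + c + 1); rewrite addrK.
Qed.

Lemma TsysB2_reduced_invertible : reduced_invertible r X Z W.
Proof.
have [hinv _] := hT.
split=> [a t /andP[a_gt0 ar] | t | t]; [| by apply: hinv; rewrite /is_gen; lia ..].
by rewrite /Tslice (gtn_eqF a_gt0); apply: hinv; rewrite /is_gen /tB; case: (a =P r) => ?; lia.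
Qed.

End TsysB2Slices.

Lemma TsysB2_shift (R : comPzRingType) (r : nat) (T : nat -> nat -> int -> R) :
  (1 < r)%N -> TsysB2 r T -> forall a m k, is_gen r a m ->
    T a m (k + (2 * (2 * r + 1))%N%:Z) = T a (2 * tB r a - m)%N k.
Proof.
move=> r_gt1 hT a m k gen.
have per c := reduced_Tsys_periodic (ltnW r_gt1) (TsysB2_reduced c r_gt1 hT)
  (TsysB2_reduced_invertible c r_gt1 hT) 0.
have shift2 c : (0 + (2 * r + 1)%N%:Z) * 2 + c = c + (2 * (2 * r + 1))%N%:Z by lia.
have [/andP[/andP[a_gt0 ar] /eqP->] | [-> [-> | ->]]] :
    (0 < a <= r)%N && (m == tB r a) \/ a = r /\ (m = 1 \/ m = 3)%N.
  by move: gen; rewrite /is_gen /tB; case: (a =P r) => ?; lia.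
- have [+ _ _] := per k => /(_ a ar); rewrite /Tslice (gtn_eqF a_gt0) shift2 mul0r add0r => ->.
  by rewrite (_ : (2 * _ - _)%N = tB r a) //; lia.
- have [_ + _] := per (k - 1); rewrite /= shift2 mul0r add0r /tB eqxx subrK.
  by rewrite addrAC subrK.
- have [_ _ +] := per (k - 1); rewrite /= shift2 mul0r add0r /tB eqxx subrK.
  by rewrite addrAC subrK.
Qed.

Lemma is_gen_dual r a m : is_gen r a m ->
  is_gen r a (2 * tB r a - m) /\ (2 * tB r a - (2 * tB r a - m))%N = m.
Proof. by rewrite /is_gen /tB; case: (a =P r) => ?; lia. Qed.

Theorem corollary7p14 (r : nat) (hr : (2 <= r)%N) (R : comPzRingType)
    (T : nat -> nat -> int -> R) (hT : TsysB2 r T) :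
  forall (a m : nat) (k : int), is_gen r a m ->
    T a m (k + (2 * (2 * r + 1))%N%:Z) = T a (2 * tB r a - m)%N k /\
    T a m (k + (4 * (2 * r + 1))%N%:Z) = T a m k.
Proof.
move=> a m k gen; have [gen' dualK] := is_gen_dual gen.
split; first exact: TsysB2_shift.
rewrite (_ : k + _ = k + (2 * (2 * r + 1))%N%:Z + (2 * (2 * r + 1))%N%:Z); last by lia.
by rewrite !TsysB2_shift // dualK.
Qed.
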